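(* Let $(X,\mathcal{U})$ be a uniform space with $\mathcal{F}$, $\mathcal{V}$, $G$ as in the context, and let $T:X\to X$ be a Ćirić-$G$-contraction. Then for every $x\in X_T$ the sequence $\{T^nx\}$ is Cauchy in $X$.
   Context: A uniform space $(X,\mathcal{U})$ is a nonempty set $X$ with a uniformity $\mathcal{U}$ on $X$. For $U,V\subseteq X\times X$, $\Delta(X)=\{(x,x):x\in X\}$ and $U\circ V=\{(x,y):\exists z\in X,\ (x,z)\in V,\ (z,y)\in U\}$. A sequence $\{x_n\}$ is Cauchy if for every $U\in\mathcal{U}$ there is $N$ with $(x_m,x_n)\in U$ for $m,n\ge N$. $\mathcal{F}$ is a nonempty collection of (uniformly continuous) pseudometrics on $X$ generating $\mathcal{U}$, and $\mathcal{V}$ is the family of all sets $V=\bigcap_{i=1}^m\{(x,y)\in X\times X:\rho_i(x,y)<r_i\}$ with $m\ge1$, $\rho_i\in\mathcal{F}$, $r_i>0$; $\mathcal{V}$ is a base for $\mathcal{U}$. For such $V$ and $\beta>0$, $\beta V=\bigcap_{i=1}^m\{(x,y):\rho_i(x,y)<\beta r_i\}$. $G$ is a directed graph without parallel edges with vertex set $X$ and edge set $E(G)\subseteq X\times X$ containing $\Delta(X)$. For $T:X\to X$, $X_T=\{x\in X:(x,Tx)\in E(G)\}$. A map $T:X\to X$ is a Ćirić-$G$-contraction if (C1) $(x,y)\in E(G)$ implies $(Tx,Ty)\in E(G)$; and (C2) there are positive-valued functions $a_1,a_2,a_3,a_4$ on $X\times X$ with $\sup\{a_1(x,y)+a_2(x,y)+a_3(x,y)+2a_4(x,y):x,y\in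 X\}=\alpha<1$ such that for all $x,y\in X$ and all $V_1,\dots,V_5\in\mathcal{V}$: if $(x,y)\in E(G)\cap V_1$, $(x,Tx)\in V_2$, $(y,Ty)\in V_3$, $(x,Ty)\in V_4$, $(y,Tx)\in V_5$, then $(Tx,Ty)\in a_1(x,y)V_1\circ a_2(x,y)V_2\circ a_3(x,y)V_3\circ a_4(x,y)V_4\circ a_4(x,y)V_5$. *)

From Stdlib Require Import Reals List.
Open Scope R_scope.

Definition is_pseudometric {X : Type} (rho : X -> X -> R) : Prop :=
  (forall x, rho x x = 0) /\
  (forall x y, 0 <= rho x y) /\
  (forall x y, rho x y = rho y x) /\
  (forall x y z, rho x z <= rho x y + rho y z).

Definition rel (X : Type) := X -> X -> Prop.

Definition rcomp {X : Type} (U V : rel X) : rel X :=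
  fun x y => exists z, V x z /\ U z y.

(* A member of the base family 𝒱 is presented by a nonempty finite list
   [(rho_1,r_1); ...; (rho_m,r_m)] with rho_i in F and r_i > 0. *)
Definition base_rep (X : Type) := list ((X -> X -> R) * R).

Definition is_base_rep {X : Type} (F : (X -> X -> R) -> Prop)
  (v : base_rep X) : Prop :=
  v <> nil /\ forall p, In p v -> F (fst p) /\ 0 < snd p.

(* beta V = ⋂_i {(x,y) : rho_i(x,y) < beta r_i};  V itself is 1 V. *)
Definition scaled_set {X : Type} (beta : R) (v : base_rep X) : rel X :=
  fun x y => forall p, In p v -> fst p x y < beta * snd p.

Definition base_set {X : Type} (v : base_rep X) : rel X := scaled_set 1 v.

Definition in_uniformity {X : Type} (F : (X -> X -> R) -> Prop)
  (U : rel X) : Prop :=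
  exists v, is_base_rep F v /\ forall x y, base_set v x y -> U x y.

Definition cauchy_seq {X : Type} (F : (X -> X -> R) -> Prop)
  (s : nat -> X) : Prop :=
  forall U, in_uniformity F U ->
    exists N, forall m n, (N <= m)%nat -> (N <= n)%nat -> U (s m) (s n).

(* Ćirić-G-contraction; E is the edge set of G. *)
Definition ciric_G_contraction {X : Type} (F : (X -> X -> R) -> Prop)
  (E : rel X) (T : X -> X) : Prop :=
  (forall x y, E x y -> E (T x) (T y)) /\
  exists (a1 a2 a3 a4 : X -> X -> R) (alpha : R),
    (forall x y, 0 < a1 x y /\ 0 < a2 x y /\ 0 < a3 x y /\ 0 < a4 x y) /\
    is_lub (fun s => exists x y,
              s = a1 x y + a2 x y + a3 x y + 2 * a4 x y) alpha /\
    alpha < 1 /\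
    forall x y (v1 v2 v3 v4 v5 : base_rep X),
      is_base_rep F v1 -> is_base_rep F v2 -> is_base_rep F v3 ->
      is_base_rep F v4 -> is_base_rep F v5 ->
      E x y -> base_set v1 x y ->
      base_set v2 x (T x) -> base_set v3 y (T y) ->
      base_set v4 x (T y) -> base_set v5 y (T x) ->
      rcomp (scaled_set (a1 x y) v1)
        (rcomp (scaled_set (a2 x y) v2)
          (rcomp (scaled_set (a3 x y) v3)
            (rcomp (scaled_set (a4 x y) v4) (scaled_set (a4 x y) v5))))
        (T x) (T y).

(* Testing the contraction condition on singleton basic entourages
   {(u, w) : rho u w < rho x y + e} turns it, for each pseudometric rho of F,
   into the metric Ćirić inequality
     rho(Tx,Ty) <= a1 rho(x,y) + a2 rho(x,Tx) + a3 rho(y,Ty)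
                   + a4 (rho(x,Ty) + rho(y,Tx)).
   Since T preserves edges and x -> Tx is an edge, consecutive orbit points
   are joined by edges, and the inequality at (T^n x, T^(n+1) x) gives
   rho(T^(n+1) x, T^(n+2) x) <= alpha rho(T^n x, T^(n+1) x).  The orbit is thus
   rho-Cauchy for every rho in F, and a basic entourage is a finite
   intersection of rho-balls. *)

From Stdlib Require Import Reals List Lra Lia.
Open Scope R_scope.

Definition rho_cauchy {X : Type} (rho : X -> X -> R) (s : nat -> X) : Prop :=
  forall r, 0 < r ->
    exists N, forall m n, (N <= m)%nat -> (N <= n)%nat -> rho (s m) (s n) < r.

Lemma cauchy_seq_of_rho_cauchy {X : Type} (F : (X -> X -> R) -> Prop)
  (s : nat -> X) :
  (forall rho, F rho -> rho_cauchy rho s) -> cauchy_seq F s.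
Proof.
  intros Hrho U [v [[_ Hv] HU]].
  enough (Hv_all : exists N, forall m n, (N <= m)%nat -> (N <= n)%nat ->
            forall p, In p v -> fst p (s m) (s n) < snd p).
  { destruct Hv_all as [N HN]. exists N. intros m n Hm Hn. apply HU.
    intros p Hp. rewrite Rmult_1_l. auto. }
  clear HU. induction v as [|p v IH].
  - exists 0%nat. intros m n _ _ p [].
  - destruct IH as [N1 HN1]; [intros q Hq; apply Hv; now right|].
    destruct (Hv p (or_introl eq_refl)) as [HFp Hrp].
    destruct (Hrho _ HFp _ Hrp) as [N2 HN2].
    exists (Nat.max N1 N2). intros m n Hm Hn q [<-|Hq].
    + apply HN2; lia.
    + apply HN1; auto; lia.
Qed.

Section GeometricSteps.

Variables (X : Type) (rho : X -> X -> R) (s : nat -> X) (alpha : R).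
Hypothesis Hrho : is_pseudometric rho.
Hypotheses (Halpha0 : 0 <= alpha) (Halpha1 : alpha < 1).
Hypothesis Hstep :
  forall n, rho (s (S n)) (s (S (S n))) <= alpha * rho (s n) (s (S n)).

Let D := rho (s 0%nat) (s 1%nat).

Lemma geometric_step_bound n : rho (s n) (s (S n)) <= D * alpha ^ n.
Proof.
  induction n as [|n IH]; simpl; [rewrite Rmult_1_r; apply Rle_refl|].
  pose proof (Hstep n).
  assert (alpha * rho (s n) (s (S n)) <= alpha * (D * alpha ^ n))
    by (apply Rmult_le_compat_l; lra).
  replace (D * (alpha * alpha ^ n)) with (alpha * (D * alpha ^ n)) by ring.
  lra.
Qed.

Lemma geometric_tail_bound m k :
  (1 - alpha) * rho (s m) (s (m + k)%nat) <= D * alpha ^ m.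
Proof.
  destruct Hrho as (Hdiag & Hnn & _ & Htri).
  assert (HD : 0 <= D) by apply Hnn.
  pose proof (pow_le alpha m Halpha0).
  enough (Hk : (1 - alpha) * rho (s m) (s (m + k)%nat)
               <= D * alpha ^ m * (1 - alpha ^ k)).
  { pose proof (pow_le alpha k Halpha0).
    assert (0 <= D * alpha ^ m * alpha ^ k) by (repeat apply Rmult_le_pos; lra).
    nra. }
  induction k as [|k IH].
  - rewrite Nat.add_0_r, Hdiag. simpl. lra.
  - replace (m + S k)%nat with (S (m + k)) by lia.
    pose proof (Htri (s m) (s (m + k)%nat) (s (S (m + k)))).
    pose proof (geometric_step_bound (m + k)) as Hmk. rewrite pow_add in Hmk.
    assert (0 <= 1 - alpha) by lra.
    simpl pow. nra.
Qed.

Lemma rho_cauchy_of_geometric_steps : rho_cauchy rho s.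
Proof.
  destruct Hrho as (_ & Hnn & Hsym & _).
  intros r Hr.
  assert (HD : 0 <= D) by apply Hnn.
  assert (Hy : 0 < (1 - alpha) * r / (D + 1))
    by (apply Rdiv_lt_0_compat; nra).
  destruct (pow_lt_1_zero alpha ltac:(rewrite Rabs_pos_eq; lra) _ Hy) as [N HN].
  assert (Htail : forall m k, (N <= m)%nat -> rho (s m) (s (m + k)%nat) < r).
  { intros m k Hm.
    specialize (HN m Hm). rewrite Rabs_pos_eq in HN by (apply pow_le; lra).
    apply (Rmult_lt_compat_l (D + 1)) in HN; [|lra].
    replace ((D + 1) * ((1 - alpha) * r / (D + 1))) with ((1 - alpha) * r)
      in HN by (field; lra).
    pose proof (geometric_tail_bound m k).
    pose proof (pow_le alpha m Halpha0).
    apply (Rmult_lt_reg_l (1 - alpha)); nra. }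
  exists N. intros m n Hm Hn.
  destruct (Nat.le_ge_cases m n) as [Hmn|Hmn].
  - replace n with (m + (n - m))%nat by lia. auto.
  - rewrite Hsym. replace m with (n + (m - n))%nat by lia. auto.
Qed.

End GeometricSteps.

Lemma scaled_set_singleton_lt {X : Type} (rho : X -> X -> R) (a r : R) u w :
  scaled_set a ((rho, r) :: nil) u w -> rho u w < a * r.
Proof. intros H. exact (H (rho, r) (or_introl eq_refl)). Qed.

Lemma base_set_singleton {X : Type} (rho : X -> X -> R) (r : R) u w :
  rho u w < r -> base_set ((rho, r) :: nil) u w.
Proof. intros H p [<-|[]]. simpl. lra. Qed.

Lemma is_base_rep_singleton {X : Type} (F : (X -> X -> R) -> Prop) rho r :
  F rho -> 0 < r -> is_base_rep F ((rho, r) :: nil).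
Proof. intros HF Hr. split; [discriminate|]. intros p [<-|[]]. simpl; auto. Qed.

Lemma rcomp_lt {X : Type} (rho : X -> X -> R) (U V : rel X) (cU cV : R) :
  (forall x y z, rho x z <= rho x y + rho y z) ->
  (forall u w, U u w -> rho u w < cU) ->
  (forall u w, V u w -> rho u w < cV) ->
  forall u w, rcomp U V u w -> rho u w < cV + cU.
Proof.
  intros Htri HU HV u w [z [Hz1 Hz2]].
  pose proof (Htri u z w). pose proof (HV _ _ Hz1). pose proof (HU _ _ Hz2). lra.
Qed.

Lemma real_ciric_step (b1 b2 b3 b4 alpha d0 d1 q : R) :
  0 <= b1 -> 0 <= b2 -> 0 <= b3 -> 0 <= b4 ->
  b1 + b2 + b3 + 2 * b4 <= alpha -> alpha < 1 ->
  0 <= d0 -> q <= d0 + d1 ->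
  d1 <= b1 * d0 + b2 * d0 + b3 * d1 + b4 * (q + 0) ->
  d1 <= alpha * d0.
Proof.
  intros Hb1 Hb2 Hb3 Hb4 Hsum Halpha Hd0 Hq Hd1.
  (* (1 - b3 - b4) d1 <= (b1 + b2 + b4) d0 <= (1 - b3 - b4) alpha d0 *)
  assert (Hq' : b4 * q <= b4 * (d0 + d1)) by (apply Rmult_le_compat_l; lra).
  assert (Hcoef : 0 < 1 - b3 - b4) by lra.
  assert (0 <= (b3 + b4) * (1 - alpha) * d0)
    by (repeat apply Rmult_le_pos; lra).
  apply (Rmult_le_reg_l (1 - b3 - b4)); nra.
Qed.

Section CiricContraction.

Variables (X : Type) (F : (X -> X -> R) -> Prop) (E : rel X) (T : X -> X).
Variables (a1 a2 a3 a4 : X -> X -> R) (alpha : R).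
Hypothesis HFpm : forall rho, F rho -> is_pseudometric rho.
Hypothesis Hpos : forall x y, 0 < a1 x y /\ 0 < a2 x y /\ 0 < a3 x y /\ 0 < a4 x y.
Hypothesis Hsum : forall x y, a1 x y + a2 x y + a3 x y + 2 * a4 x y <= alpha.
Hypothesis Halpha : alpha < 1.
Hypothesis Hcontr :
  forall x y (v1 v2 v3 v4 v5 : base_rep X),
    is_base_rep F v1 -> is_base_rep F v2 -> is_base_rep F v3 ->
    is_base_rep F v4 -> is_base_rep F v5 ->
    E x y -> base_set v1 x y ->
    base_set v2 x (T x) -> base_set v3 y (T y) ->
    base_set v4 x (T y) -> base_set v5 y (T x) ->
    rcomp (scaled_set (a1 x y) v1)
      (rcomp (scaled_set (a2 x y) v2)
        (rcomp (scaled_set (a3 x y) v3)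
          (rcomp (scaled_set (a4 x y) v4) (scaled_set (a4 x y) v5))))
      (T x) (T y).

Lemma ciric_pseudometric_ineq rho x y : F rho -> E x y ->
  rho (T x) (T y) <= a1 x y * rho x y + a2 x y * rho x (T x)
     + a3 x y * rho y (T y) + a4 x y * (rho x (T y) + rho y (T x)).
Proof.
  intros HF HE.
  destruct (HFpm rho HF) as (_ & Hnn & _ & Htri).
  destruct (Hpos x y) as (p1 & p2 & p3 & p4).
  apply Rle_plus_epsilon. intros eps Heps.
  set (K := a1 x y + a2 x y + a3 x y + 2 * a4 x y).
  set (e := eps / K).
  assert (He : 0 < e) by (apply Rdiv_lt_0_compat; unfold K; lra).
  assert (HeK : e * K = eps) by (unfold e, K; field; lra).
  set (ball d := (rho, d + e) :: nil).
  assert (Hrep : forall d, 0 <= d -> is_base_rep F (ball d))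
    by (intros d Hd; apply is_base_rep_singleton; [assumption|lra]).
  assert (Hin : forall u w, base_set (ball (rho u w)) u w)
    by (intros u w; apply base_set_singleton; lra).
  assert (Hball : forall a d u w, scaled_set a (ball d) u w -> rho u w < a * (d + e))
    by (intros a d u w; apply scaled_set_singleton_lt).
  pose proof (Hcontr x y (ball (rho x y)) (ball (rho x (T x)))
    (ball (rho y (T y))) (ball (rho x (T y))) (ball (rho y (T x)))
    (Hrep _ (Hnn _ _)) (Hrep _ (Hnn _ _)) (Hrep _ (Hnn _ _))
    (Hrep _ (Hnn _ _)) (Hrep _ (Hnn _ _)) HE
    (Hin _ _) (Hin _ _) (Hin _ _) (Hin _ _) (Hin _ _)) as Hchain.
  apply (rcomp_lt rho _ _ _ _ Htri (Hball _ _)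
    (rcomp_lt rho _ _ _ _ Htri (Hball _ _)
      (rcomp_lt rho _ _ _ _ Htri (Hball _ _)
        (rcomp_lt rho _ _ _ _ Htri (Hball _ _) (Hball _ _))))) in Hchain.
  unfold K in HeK. nra.
Qed.

Lemma ciric_orbit_step rho x : F rho -> E x (T x) ->
  rho (T x) (T (T x)) <= alpha * rho x (T x).
Proof.
  intros HF HE.
  destruct (HFpm rho HF) as (Hdiag & Hnn & _ & Htri).
  destruct (Hpos x (T x)) as (p1 & p2 & p3 & p4).
  pose proof (ciric_pseudometric_ineq rho x (T x) HF HE) as H.
  rewrite Hdiag in H.
  apply (real_ciric_step (a1 x (T x)) (a2 x (T x)) (a3 x (T x)) (a4 x (T x))
           _ _ _ (rho x (T (T x))));
    [lra | lra | lra | lra | apply Hsum | exact Halpha | apply Hnn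
    | apply Htri | exact H].
Qed.

End CiricContraction.

Lemma orbit_edges {X : Type} (E : rel X) (T : X -> X) x :
  (forall u w, E u w -> E (T u) (T w)) -> E x (T x) ->
  forall n, E (Nat.iter n T x) (Nat.iter (S n) T x).
Proof. intros HTE Hx n. induction n as [|n IH]; simpl; auto. Qed.

Theorem lemma3 (X : Type) (x0 : X)
  (F : (X -> X -> R) -> Prop)
  (HFpm : forall rho, F rho -> is_pseudometric rho)
  (HFne : exists rho, F rho)
  (E : X -> X -> Prop) (HErefl : forall x, E x x)
  (T : X -> X) (HT : ciric_G_contraction F E T) :
  forall x, E x (T x) -> cauchy_seq F (fun n => Nat.iter n T x).
Proof.
  intros x Hx.
  destruct HT as [HTE [a1 [a2 [a3 [a4 [alpha [Hpos [Hlub [Halpha Hcontr]]]]]]]]].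
  assert (Hsum : forall u w, a1 u w + a2 u w + a3 u w + 2 * a4 u w <= alpha)
    by (intros u w; apply (proj1 Hlub); now exists u, w).
  assert (Halpha0 : 0 <= alpha)
    by (pose proof (Hsum x x); destruct (Hpos x x) as (?&?&?&?); lra).
  apply cauchy_seq_of_rho_cauchy. intros rho HF.
  apply (rho_cauchy_of_geometric_steps _ rho _ alpha (HFpm rho HF) Halpha0 Halpha).
  intros n.
  exact (ciric_orbit_step X F E T a1 a2 a3 a4 alpha HFpm Hpos Hsum Halpha Hcontr
           rho _ HF (orbit_edges E T x HTE Hx n)).
Qed.
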